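(* Let $r_0>0$, $R_c>0$, $D>0$. Let $H\subset[0,D]$ be a finite set (helper positions) and $V\subset\mathbb{R}$ a finite set (VoI positions), with $H\cap V=\emptyset$. Call a finite set of pairs $\{(h_1,v_1),\dots,(h_n,v_n)\}$ a \emph{feasible schedule} if the $h_j\in H$ are pairwise distinct, the $v_j\in V$ are pairwise distinct, $|h_j-v_j|\le r_0$ for every $j$, and $|h_i-h_j|\ge R_c$ for all $i\neq j$. Define the greedy schedule as follows. Let $g_1$ be the smallest $x\in H$ such that $[x-r_0,x+r_0]\cap V\neq\emptyset$, and let $u_1$ be the smallest element of $[g_1-r_0,g_1+r_0]\cap V$. Having defined $(g_1,u_1),\dots,(g_k,u_k)$, let $g_{k+1}$ be the smallest $x\in H$ with $x\ge g_k+R_c$ such that $[x-r_0,x+r_0]$ contains an element of $V\setminus\{u_1,\dots,u_k\}$, and let $u_{k+1}$ be the smallest element of $([g_{k+1}-r_0,g_{k+1}+r_0]\cap V)\setminus\{u_1,\dots,u_k\}$. Stop when no such $x$ exists (or when no $g_1$ exists, in which case the greedy schedule is empty). Then the greedy schedule $\{(g_1,u_1),\dots,(g_N,u_N)\}$ is a feasible schedule, and every feasible schedule has at most $N$ pairs.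
   Context: This models a stretch of road (a line) between infrastructure points: ''helpers'' are vehicles that may transmit, VoIs (vehicles of interest) are receivers, $r_0$ is the vehicle radio range and $R_c$ is the carrier-sensing range, so simultaneously transmitting helpers must be at mutual distance at least $R_c$, each transmitter sends to one VoI within distance $r_0$, and each VoI receives from at most one helper. *)

From Stdlib Require Import Reals Lra List Bool.
Import ListNotations.
Open Scope R_scope.

Definition Rleb (a b : R) : bool := if Rle_dec a b then true else false.
Definition Rinb (x : R) (l : list R) : bool := if in_dec Req_EM_T x l then true else false.

Fixpoint minl (l : list R) : option R :=
  match l with
  | [] => None
  | x :: t => match minl t with
              | None => Some x
              | Some m => if Rleb x m then Some x else Some m
              end
  end.

Definition avail (r0 : R) (V used : list R) (x : R) : list R :=
  filter (fun v => negb (Rinb v used) && Rleb (x - r0) v && Rleb v (x + r0)) V.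

Definition candidates (r0 Rc : R) (H V used : list R) (last : option R) : list R :=
  filter (fun x => match last with
                   | None => true
                   | Some g => Rleb (g + Rc) x
                   end
                   && negb (match avail r0 V used x with [] => true | _ => false end)) H.

(* The greedy schedule; [fuel] bounds the number of steps.  Since successive
   greedy helpers strictly increase (Rc > 0) and lie in H, fuel = length H
   steps suffice for the process to have stopped. *)
Fixpoint greedy_aux (fuel : nat) (r0 Rc : R) (H V used : list R) (last : option R)
  : list (R * R) :=
  match fuel with
  | O => []
  | S f =>
    match minl (candidates r0 Rc H V used last) with
    | None => []
    | Some g =>
      match minl (avail r0 V used g) with
      | None => []
      | Some u => (g, u) :: greedy_aux f r0 Rc H V (used ++ [u]) (Some g)
      end
    end
  end.

Definition greedy (r0 Rc : R) (H V : list R) : list (R * R) :=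
  greedy_aux (length H) r0 Rc H V [] None.

Definition feasible (r0 Rc : R) (H V : list R) (S : list (R * R)) : Prop :=
  NoDup (map fst S) /\
  NoDup (map snd S) /\
  (forall p, In p S -> In (fst p) H /\ In (snd p) V /\ Rabs (fst p - snd p) <= r0) /\
  (forall p q, In p S -> In q S -> p <> q -> Rabs (fst p - fst q) >= Rc).

(* Exchange argument.  Take any feasible schedule and its leftmost pair (h, v).
   The first greedy helper g satisfies g <= h, and its VoI u satisfies u <= v:
   either v is within reach of g, or v > g + r0 >= u.  Replace (h, v) by (g, u);
   if u was served by another pair (h', u), give that pair v instead, which is
   within reach since h' >= h + Rc and u <= v <= h + r0.  The remaining pairs
   form a feasible schedule of the residual problem that the greedy solves next,
   so induction shows that the greedy schedule is at least as long. *)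

From Stdlib Require Import Reals List Lra Lia Bool.
Import ListNotations.
Open Scope R_scope.

Lemma Rleb_true a b : Rleb a b = true <-> a <= b.
Proof. unfold Rleb; destruct (Rle_dec a b); split; intros; auto; try discriminate; contradiction. Qed.

Lemma Rinb_false x l : Rinb x l = false <-> ~ In x l.
Proof. unfold Rinb; destruct (in_dec Req_EM_T x l); split; intros; auto; try discriminate; contradiction. Qed.

Lemma Rabs_le_iff x r : Rabs x <= r <-> - r <= x <= r.
Proof. unfold Rabs; destruct (Rcase_abs x); split; intros; lra. Qed.

Lemma minl_spec l m : minl l = Some m -> In m l /\ forall x, In x l -> m <= x.
Proof.
  revert m; induction l as [|a l IH]; intros m E; simpl in E; [discriminate|].
  destruct (minl l) as [r|] eqn:Er.
  - destruct (IH r eq_refl) as [Hr Hmin].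
    destruct (Rleb a r) eqn:Ear; injection E as <-.
    + apply Rleb_true in Ear. split; [now left|].
      intros x [<-|Hx]; [lra|]. specialize (Hmin x Hx); lra.
    + assert (r < a) by (unfold Rleb in Ear; destruct (Rle_dec a r); [discriminate|lra]).
      split; [now right|]. intros x [<-|Hx]; [lra|auto].
  - injection E as <-. destruct l as [|b l]; [|simpl in Er; destruct (minl l);
      [destruct (Rleb b _)|]; discriminate].
    split; [now left|]. intros x [<-|[]]; lra.
Qed.

Lemma minl_None l : minl l = None -> l = [].
Proof. destruct l; simpl; auto; destruct (minl l); try destruct (Rleb _ _); discriminate. Qed.

Lemma minl_Some l x : In x l -> exists m, minl l = Some m.
Proof. intros Hx; destruct (minl l) eqn:E; eauto. apply minl_None in E; subst; contradiction. Qed.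

Lemma NoDup_map_inj {A B} (f : A -> B) l x y :
  NoDup (map f l) -> In x l -> In y l -> f x = f y -> x = y.
Proof.
  induction l as [|a l IH]; intros N Hx Hy E; [contradiction|]; inversion N as [|? ? Na Nl]; subst.
  destruct Hx as [<-|Hx], Hy as [<-|Hy]; auto.
  - exfalso; apply Na; rewrite E; now apply in_map.
  - exfalso; apply Na; rewrite <- E; now apply in_map.
Qed.

Lemma exists_min_fst (S : list (R * R)) :
  S <> [] -> exists p, In p S /\ forall q, In q S -> fst p <= fst q.
Proof.
  induction S as [|a S IH]; intros N; [contradiction|].
  destruct S as [|b S'].
  - exists a; split; [now left|]. intros q [<-|[]]; lra.
  - destruct (IH ltac:(discriminate)) as [p [Hp Hm]].
    destruct (Rle_dec (fst a) (fst p)).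
    + exists a; split; [now left|]. intros q [<-|Hq]; [lra|]. specialize (Hm q Hq); lra.
    + exists p; split; [now right|]. intros q [<-|Hq]; [lra|auto].
Qed.

Definition after_last (last : option R) (Rc x : R) : Prop :=
  match last with None => True | Some g => g + Rc <= x end.

Lemma after_last_le last Rc g x : after_last last Rc g -> g <= x -> after_last last Rc x.
Proof. destruct last; simpl; lra. Qed.

Lemma avail_In r0 V used x v :
  In v (avail r0 V used x) <-> In v V /\ ~ In v used /\ x - r0 <= v <= x + r0.
Proof.
  unfold avail. rewrite filter_In, !andb_true_iff, negb_true_iff, Rinb_false, !Rleb_true.
  tauto.
Qed.

Lemma candidates_In r0 Rc H V used last x :
  In x (candidates r0 Rc H V used last) <->
  In x H /\ after_last last Rc x /\ avail r0 V used x <> [].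
Proof.
  unfold candidates. rewrite filter_In, andb_true_iff.
  destruct last; simpl; [rewrite Rleb_true|];
  destruct (avail r0 V used x); simpl; split; intros; intuition (try discriminate).
Qed.

Definition replace_R (a b x : R) : R := if Req_EM_T x a then b else x.

Lemma NoDup_map_replace_R a b l :
  NoDup l -> ~ In b l -> NoDup (map (replace_R a b) l).
Proof.
  induction l as [|x l IH]; intros N Hb; simpl; [constructor|].
  inversion N as [|? ? Nx Nl]; subst. constructor.
  - rewrite in_map_iff. intros [y [Ey Hy]]. unfold replace_R in Ey.
    destruct (Req_EM_T y a), (Req_EM_T x a); subst.
    + now apply Nx.
    + apply Hb; now left.
    + apply Hb; now right.
    + now apply Nx.
  - apply IH; auto. intro; apply Hb; now right.
Qed.

Definition reassign (u v : R) (q : R * R) : R * R := (fst q, replace_R u v (snd q)).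

(* Feasible schedules of the residual problem after the greedy has spent the
   VoIs [used] and placed its latest helper at [last]; the separation condition
   is only required in the increasing direction, which makes it inherited by
   sublists and by [reassign]. *)
Definition admissible (r0 Rc : R) (H V used : list R) (last : option R)
    (S : list (R * R)) : Prop :=
  NoDup (map fst S) /\ NoDup (map snd S) /\
  (forall p, In p S -> In (fst p) H /\ In (snd p) V /\ Rabs (fst p - snd p) <= r0 /\
      ~ In (snd p) used /\ after_last last Rc (fst p)) /\
  (forall p q, In p S -> In q S -> fst p < fst q -> fst p + Rc <= fst q).

Lemma feasible_admissible r0 Rc H V S :
  feasible r0 Rc H V S <-> admissible r0 Rc H V [] None S.
Proof.
  split; intros (Nf & Ns & Hp & Hsep); do 2 (split; [assumption|]); split.
  - intros p Hin; destruct (Hp p Hin) as (? & ? & ?); simpl; tauto.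
  - intros p q Hpin Hqin Hlt.
    assert (p <> q) as Hpq by (intros ->; lra).
    specialize (Hsep p q Hpin Hqin Hpq).
    unfold Rabs in Hsep; destruct (Rcase_abs (fst p - fst q)); lra.
  - intros p Hin; destruct (Hp p Hin) as (? & ? & ? & _); tauto.
  - intros p q Hpin Hqin Hpq.
    assert (fst p <> fst q) as Hne.
    { intro E; apply Hpq; exact (NoDup_map_inj fst S p q Nf Hpin Hqin E). }
    destruct (Rlt_or_le (fst p) (fst q)) as [Hlt|Hle].
    + specialize (Hsep p q Hpin Hqin Hlt). rewrite Rabs_left1; lra.
    + assert (fst q < fst p) as Hlt by lra. specialize (Hsep q p Hqin Hpin Hlt).
      rewrite Rabs_right; lra.
Qed.

Lemma admissible_cons r0 Rc H V used last g u G :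
  0 < Rc -> admissible r0 Rc H V (used ++ [u]) (Some g) G ->
  In g H -> In u V -> g - r0 <= u <= g + r0 -> ~ In u used -> after_last last Rc g ->
  admissible r0 Rc H V used last ((g, u) :: G).
Proof.
  intros HRc (Nf & Ns & Hp & Hsep) HgH HuV Hgu Hu Hg.
  assert (HG : forall p, In p G -> g + Rc <= fst p /\ ~ In (snd p) used /\ snd p <> u).
  { intros p Hin. destruct (Hp p Hin) as (_ & _ & _ & Hused & Hafter).
    rewrite in_app_iff in Hused. simpl in Hafter.
    repeat split; [assumption| |]; intro X; apply Hused; [now left|right; now left]. }
  split; [|split; [|split]]; simpl.
  - constructor; [|assumption]. rewrite in_map_iff. intros [p [E Hin]].
    destruct (HG p Hin) as [? _]; lra.
  - constructor; [|assumption]. rewrite in_map_iff. intros [p [E Hin]].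
    now destruct (HG p Hin) as (_ & _ & ?).
  - intros p [<-|Hin]; simpl.
    + repeat split; auto. apply Rabs_le_iff; lra.
    + destruct (Hp p Hin) as (? & ? & ? & _), (HG p Hin) as (? & ? & _).
      repeat split; auto. apply (after_last_le _ _ g); [assumption|lra].
  - intros p q [<-|Hp'] [<-|Hq'] Hlt; simpl in *; try lra.
    + now destruct (HG q Hq').
    + destruct (HG p Hp'); lra.
    + now apply Hsep.
Qed.

Lemma greedy_aux_admissible r0 Rc H V :
  0 < Rc -> forall fuel used last,
  admissible r0 Rc H V used last (greedy_aux fuel r0 Rc H V used last).
Proof.
  intros HRc fuel; induction fuel as [|f IH]; intros used last; cbn [greedy_aux].
  { repeat split; simpl; try constructor; contradiction. }
  destruct (minl (candidates r0 Rc H V used last)) as [g|] eqn:Eg;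
    [| repeat split; simpl; try constructor; contradiction].
  destruct (minl (avail r0 V used g)) as [u|] eqn:Eu;
    [| repeat split; simpl; try constructor; contradiction].
  destruct (minl_spec _ _ Eg) as [Hg _]. apply candidates_In in Hg as (HgH & Hg & _).
  destruct (minl_spec _ _ Eu) as [Hu _]. apply avail_In in Hu as (HuV & Hu & Hgu).
  apply admissible_cons; auto.
Qed.

Lemma admissible_exchange r0 Rc H V used last l1 l2 h v g u :
  admissible r0 Rc H V used last (l1 ++ (h, v) :: l2) ->
  (forall q, In q (l1 ++ (h, v) :: l2) -> h <= fst q) ->
  g <= h -> u <= v ->
  admissible r0 Rc H V (used ++ [u]) (Some g) (map (reassign u v) (l1 ++ l2)).
Proof.
  intros (Nf & Ns & Hp & Hsep) Hleft Hgh Huv.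
  set (L := l1 ++ l2).
  assert (HL : forall q, In q L -> In q (l1 ++ (h, v) :: l2)).
  { intros q. unfold L. rewrite !in_app_iff. simpl. tauto. }
  rewrite map_app in Nf, Ns. simpl in Nf, Ns.
  pose proof (NoDup_remove_1 _ _ _ Nf) as NfL. pose proof (NoDup_remove_2 _ _ _ Nf) as Nh.
  pose proof (NoDup_remove_1 _ _ _ Ns) as NsL. pose proof (NoDup_remove_2 _ _ _ Ns) as Nv.
  rewrite <- map_app in NfL, Nh, NsL, Nv. fold L in NfL, Nh, NsL, Nv.
  destruct (Hp (h, v)) as (_ & HvV & Hhv & Hv & _); [apply in_or_app; now right; left|].
  simpl in Hhv, Hv. apply Rabs_le_iff in Hhv.
  assert (Hright : forall q, In q L -> h + Rc <= fst q).
  { intros q Hq. assert (fst q <> h) by (intro E; apply Nh; rewrite <- E; now apply in_map).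
    specialize (Hleft q (HL q Hq)). apply (Hsep (h, v) q); [|auto|simpl; lra].
    apply in_or_app; now right; left. }
  split; [|split; [|split]].
  - now rewrite map_map.
  - rewrite map_map. change (NoDup (map (fun q => replace_R u v (snd q)) L)).
    rewrite <- map_map. now apply NoDup_map_replace_R.
  - intros p' Hp'. apply in_map_iff in Hp' as [q [<- Hq]].
    destruct (Hp q (HL q Hq)) as (HqH & HqV & Hq_r0 & Hq_used & _).
    pose proof (Hright q Hq). pose proof (Hleft q (HL q Hq)). apply Rabs_le_iff in Hq_r0.
    unfold reassign, replace_R; simpl. destruct (Req_EM_T (snd q) u) as [E|E].
    + split; [assumption|split; [assumption|split; [apply Rabs_le_iff; lra|split; [|lra]]]].
      rewrite in_app_iff. intros [X|[X|[]]]; [auto|].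
      apply Nv. rewrite <- X, <- E. now apply in_map.
    + split; [assumption|split; [assumption|split; [apply Rabs_le_iff; lra|split; [|lra]]]].
      rewrite in_app_iff. intros [X|[X|[]]]; auto.
  - intros p' q' Hp' Hq'. apply in_map_iff in Hp' as [p [<- Hp_in]].
    apply in_map_iff in Hq' as [q [<- Hq_in]]. simpl. apply Hsep; auto.
Qed.

Lemma greedy_aux_optimal r0 Rc H V :
  forall fuel used last S,
  admissible r0 Rc H V used last S -> (length S <= fuel)%nat ->
  (length S <= length (greedy_aux fuel r0 Rc H V used last))%nat.
Proof.
  intros fuel; induction fuel as [|f IH]; intros used last S HS Hlen; [simpl; lia|].
  destruct S as [|p0 S0]; [simpl; lia|].
  destruct (exists_min_fst (p0 :: S0) ltac:(discriminate)) as [[h v] [Hhv Hleft]].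
  destruct (proj1 (proj2 (proj2 HS)) _ Hhv) as (HhH & HvV & Hh_r0 & Hv & Hh). simpl in HhH, HvV, Hh_r0, Hv, Hh.
  apply Rabs_le_iff in Hh_r0.
  assert (Havail : In v (avail r0 V used h)) by (apply avail_In; repeat split; auto; lra).
  assert (Hcand : In h (candidates r0 Rc H V used last)).
  { apply candidates_In; repeat split; auto. intro E; now rewrite E in Havail. }
  destruct (minl_Some _ _ Hcand) as [g Eg].
  destruct (minl_spec _ _ Eg) as [Hg Hgmin]. pose proof (Hgmin h Hcand) as Hgh.
  apply candidates_In in Hg as (_ & _ & Hg_avail).
  destruct (minl (avail r0 V used g)) as [u|] eqn:Eu; [|now apply minl_None in Eu].
  destruct (minl_spec _ _ Eu) as [Hu Humin]. apply avail_In in Hu as (_ & _ & Hgu).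
  assert (Huv : u <= v).
  { destruct (Rle_dec v (g + r0)); [|lra]. apply Humin, avail_In; repeat split; auto; lra. }
  destruct (in_split _ _ Hhv) as (l1 & l2 & Hsplit). rewrite Hsplit in *.
  cbn [greedy_aux]. rewrite Eg, Eu. cbn [length].
  pose proof (IH (used ++ [u]) (Some g) _
    (admissible_exchange _ _ _ _ _ _ _ _ _ _ _ _ HS Hleft Hgh Huv)) as IHS.
  rewrite length_map, length_app in IHS. rewrite length_app in Hlen |- *. simpl in Hlen |- *.
  specialize (IHS ltac:(lia)). lia.
Qed.

Theorem theorem2 (r0 Rc D : R) (H V : list R)
  (Hr0 : 0 < r0) (HRc : 0 < Rc) (HD : 0 < D)
  (HnodupH : NoDup H) (HnodupV : NoDup V)
  (HinD : forall x, In x H -> 0 <= x <= D)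
  (Hdisj : forall x, In x H -> ~ In x V) :
  feasible r0 Rc H V (greedy r0 Rc H V) /\
  (forall S, feasible r0 Rc H V S -> (length S <= length (greedy r0 Rc H V))%nat).
Proof.
  split.
  - apply feasible_admissible, greedy_aux_admissible, HRc.
  - intros S HS. apply greedy_aux_optimal; [now apply feasible_admissible|].
    destruct HS as (Nf & _ & Hp & _).
    rewrite <- (length_map fst S). apply NoDup_incl_length; [assumption|].
    intros x Hx. apply in_map_iff in Hx as [p [<- Hin]]. now apply Hp.
Qed.
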